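(* Let $f\in\mathbb{R}[x,y]$ and $p=(x_0,y_0)$ with $f(p)=0$ and $\frac{\partial f}{\partial y}(p)\neq0$, and let $g:I\to J$ be the differentiable function on open intervals $I\ni x_0$, $J\ni y_0$ with $g(x_0)=y_0$ and $\{(x,y)\in I\times J: f(x,y)=0\}=\{(x,g(x)):x\in I\}$. Let $[a,b]\subseteq I$ be a closed bounded interval and suppose $g$ is not a linear function. Then $g$ has only finitely many inflection points and local minimum points in $[a,b]$. *)

From HB Require Import structures.
From mathcomp Require Import all_boot all_order all_algebra.
From mathcomp Require Import all_classical all_reals all_analysis.
Set Implicit Arguments. Unset Strict Implicit. Unset Printing Implicit Defensive.
Import Order.TTheory GRing.Theory Num.Theory.
Import numFieldNormedType.Exports.
Local Open Scope classical_set_scope.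
Local Open Scope ring_scope.

(* A bivariate real polynomial f(x,y) is represented as f : {poly {poly R}},
   i.e. a polynomial in y whose coefficients are polynomials in x. *)
Definition peval2 (R : realType) (f : {poly {poly R}}) (x y : R) : R :=
  (f.[y%:P]).[x].

Definition pdy (R : realType) (f : {poly {poly R}}) (x y : R) : R :=
  peval2 f^`() x y.

Definition oitv (R : realType) (l u : \bar R) : set R :=
  [set x | (l < x%:E)%E /\ (x%:E < u)%E].

Definition convex_on (R : realType) (g : R -> R) (A : set R) : Prop :=
  forall x y t, A x -> A y -> 0 <= t -> t <= 1 ->
    g (t * x + (1 - t) * y) <= t * g x + (1 - t) * g y.

Definition concave_on (R : realType) (g : R -> R) (A : set R) : Prop :=
  convex_on (fun x => - g x) A.

Definition inflection_point (R : realType) (g : R -> R) (x : R) : Prop :=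
  exists2 d : R, 0 < d &
    (convex_on g [set z | x - d <= z <= x] /\ concave_on g [set z | x <= z <= x + d])
    \/ (concave_on g [set z | x - d <= z <= x] /\ convex_on g [set z | x <= z <= x + d]).

Definition local_min_point (R : realType) (g : R -> R) (x : R) : Prop :=
  \forall y \near x, g x <= g y.

From HB Require Import structures.
From mathcomp Require Import all_boot all_order all_algebra.
From mathcomp Require Import all_classical all_reals all_analysis.
From mathcomp Require Import lra zify ring.
Import Order.TTheory GRing.Theory Num.Theory.
Import numFieldNormedType.Exports.
Import Pdiv.Idomain.
Local Open Scope classical_set_scope.
Local Open Scope ring_scope.
Set Implicit Arguments. Unset Strict Implicit. Unset Printing Implicit Defensive.

(* Fix c in [a, b] and one side of c, and let P be a polynomial of least degree
   in y vanishing on the graph of g on that side near c.  The polynomials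
   vanishing there form a prime ideal: two coprime ones have no common zero on
   the graph near c (their resultant is a nonzero polynomial in x), and the
   one-sided germ is connected, so one of them vanishes identically.  Hence
   every polynomial either vanishes on the graph near c or has no zero there;
   in particular P_y has none, and implicit differentiation gives
   g' = - P_x / P_y and g'' = - N / P_y^3 for a polynomial N.  If P_x or N
   vanished, g would be affine on an interval, hence (the zero set of a
   polynomial restricted to a line being finite or everything, and I being
   connected) on all of I.  So g' and g'' have no zeros near c on either side,
   which rules out local minima and inflection points there, and compactness
   of [a, b] finishes the proof. *)

Section peval2.
Variable R : realType.
Implicit Types (P Q : {poly {poly R}}) (c : {poly R}) (x y : R).

Lemma peval2D P Q x y : peval2 (P + Q) x y = peval2 P x y + peval2 Q x y.
Proof. by rewrite /peval2 !hornerD. Qed.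

Lemma peval2B P Q x y : peval2 (P - Q) x y = peval2 P x y - peval2 Q x y.
Proof. by rewrite /peval2 !hornerD !hornerN. Qed.

Lemma peval2M P Q x y : peval2 (P * Q) x y = peval2 P x y * peval2 Q x y.
Proof. by rewrite /peval2 !hornerM. Qed.

Lemma peval2C c x y : peval2 c%:P x y = c.[x].
Proof. by rewrite /peval2 hornerC. Qed.

Lemma peval2X x y : peval2 'X x y = y.
Proof. by rewrite /peval2 hornerX hornerC. Qed.

Lemma peval2Z c P x y : peval2 (c *: P) x y = c.[x] * peval2 P x y.
Proof. by rewrite /peval2 hornerZ hornerM. Qed.

Lemma peval2MXaddC P c x y : peval2 (P * 'X + c%:P) x y = peval2 P x y * y + c.[x].
Proof. by rewrite peval2D peval2M peval2X peval2C. Qed.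

Lemma horner_comp_peval2 P (h : {poly R}) x : (P.[h]).[x] = peval2 P x h.[x].
Proof.
elim/poly_ind: P => [|P c IH]; first by rewrite /peval2 !horner0.
by rewrite peval2MXaddC hornerMXaddC hornerD hornerM IH.
Qed.

Definition pdx P : {poly {poly R}} := map_poly (@deriv R) P.

Lemma pdxMXaddC P c : pdx (P * 'X + c%:P) = pdx P * 'X + c^`()%:P.
Proof.
apply/polyP => i; rewrite /pdx !coefD !coefMX !coefC !coef_map_id0 ?deriv0 //.
by rewrite coefD coefMX coefC; case: i => [|i] /=; rewrite ?add0r ?addr0 ?derivD ?deriv0.
Qed.

Lemma peval2_is_derive P (g : R -> R) x dg : is_derive x 1 g dg ->
  is_derive x 1 (fun t => peval2 P t (g t))
    (peval2 (pdx P) x (g x) + peval2 P^`() x (g x) * dg).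
Proof.
move=> dgx; elim/poly_ind: P => [|P c IH].
  rewrite /pdx map_poly0 deriv0 /peval2 !horner0 mul0r addr0.
  under eq_fun do rewrite !horner0; exact: is_derive_cst.
rewrite pdxMXaddC derivMXaddC !peval2MXaddC peval2D peval2M peval2X.
under eq_fun do rewrite peval2MXaddC.
apply: is_derive_eq; rewrite /GRing.scale /=; lra.
Qed.

Lemma peval2_continuous P (g : R -> R) x : derivable g x 1 ->
  {for x, continuous (fun t => peval2 P t (g t))}.
Proof.
move=> /derivableP/(peval2_is_derive P) [dPg _].
by apply/differentiable_continuous; rewrite -derivable1_diffP.
Qed.

End peval2.

Lemma deriv_neq0 (R : numDomainType) (P : {poly {poly R}}) : (1 < size P)%N -> P^`() != 0.
Proof.
move=> sP; apply/eqP => dP0.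
have : P^`()`_(size P).-2 = 0 by rewrite dP0 coef0.
rewrite coef_deriv prednK; last by lia.
move=> /(congr1 (fun p : {poly R} => p`_(size (lead_coef P)).-1)) /eqP.
rewrite coefMn coef0 mulrn_eq0 -/(lead_coef P) -/(lead_coef (lead_coef P)) !lead_coef_eq0.
by rewrite -size_poly_eq0; case: (size P) sP => [|[|n]].
Qed.

Lemma dvdp_factor_size (R : idomainType) (p d : {poly R}) : p != 0 -> d %| p ->
  exists k q, [/\ k != 0, q != 0, k *: p = q * d & size p = (size q + size d).-1].
Proof.
move=> p0 /dvdpP [[k q] /= k0 kp]; exists k, q.
have q0 : q != 0.
  by apply: contraNneq p0 => q0; move/eqP: kp; rewrite q0 mul0r scale_poly_eq0 (negPf k0).
have d0 : d != 0.
  by apply: contraNneq p0 => d0; move/eqP: kp; rewrite d0 mulr0 scale_poly_eq0 (negPf k0).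
by split=> //; rewrite -(size_scale p k0) kp size_mul.
Qed.

Lemma connected_clopen_eq (T : topologicalType) (A B : set T) :
  connected A -> B `<=` A -> B !=set0 ->
  (forall x, B x -> \forall y \near x, A y -> B y) ->
  (forall x, A x -> ~ B x -> \forall y \near x, A y -> ~ B y) -> B = A.
Proof.
move=> cA BA B0 Bopen Bclosed; apply: cA => //.
  exists [set y | A y -> B y]°; first exact: open_interior.
  apply/seteqP; split=> [x Bx|x [Ax /nbhs_singleton]]; last exact.
  by split; [exact: BA | exact: Bopen].
exists (~` [set y | A y -> ~ B y]°); first by rewrite closedC; exact: open_interior.
apply/seteqP; split=> [x Bx|x [Ax nBx]].
  by split; [exact: BA | move=> /nbhs_singleton/(_ (BA x Bx))].
by apply: contrapT => /(Bclosed x Ax).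
Qed.

Lemma finite_set_isolated_compact (T : ptopologicalType) (K B : set T) :
  compact K -> (forall x, K x -> \forall y \near x^', ~ B y) -> finite_set (K `&` B).
Proof.
rewrite (@compact_cover T) => cK isol.
have [|x Kx|D' _ KD'] := cK T K (fun x => [set y | y = x \/ ~ B y]°).
- by move=> x _; exact: open_interior.
- exists x => //; move: (isol x Kx); rewrite /= near_withinE.
  by apply: filterS => y /= yB; case: (eqVneq y x); [left | right; exact: yB].
apply: sub_finite_set (finite_fset D') => x [Kx Bx].
by have [i D'i /nbhs_singleton [->|//]] := KD' x Kx.
Qed.

Section oitv.
Variable R : realType.
Local Open Scope ereal_scope.

Lemma open_oitv (l u : \bar R) : open (oitv l u).
Proof.
have open_gt_l : open [set x : R | l < x%:E].
  case: l => [r| |].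
  - by under eq_set do rewrite lte_fin; exact: open_gt.
  - suff -> : [set x : R | +oo < x%:E] = set0 by exact: open0.
    by apply/seteqP; split => x //=; rewrite ltNge leey.
  - suff -> : [set x : R | -oo < x%:E] = setT by exact: openT.
    by apply/seteqP; split => x //= _; exact: ltNyr.
have open_lt_u : open [set x : R | x%:E < u].
  case: u => [r| |].
  - by under eq_set do rewrite lte_fin; exact: open_lt.
  - suff -> : [set x : R | x%:E < +oo] = setT by exact: openT.
    by apply/seteqP; split => x //= _; exact: ltry.
  - suff -> : [set x : R | x%:E < -oo] = set0 by exact: open0.
    by apply/seteqP; split => x //=; rewrite ltNge leNye.
exact: openI open_gt_l open_lt_u.
Qed.

Lemma connected_oitv (l u : \bar R) : connected (oitv l u).
Proof.
apply/connected_intervalP => x y [lx xu] [ly yu] z /andP[xz zy]; split.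
  by rewrite (lt_le_trans lx) ?lee_fin.
by rewrite (le_lt_trans _ yu) ?lee_fin.
Qed.

End oitv.

Section one_sided.
Variable R : realType.

Lemma near_poly_neq0 (q : {poly R}) (c : R) : q != 0 -> \forall x \near c^', q.[x] != 0.
Proof.
move=> q0; have [m [q1 q1c ->]] := multiplicity_XsubC q c; rewrite q0 /= in q1c.
have q1_near : \forall x \near c, q1.[x] != 0.
  exact: (cvgr_neq0 (f := horner q1) _ (fun t => @continuous_horner R q1 c t) q1c).
near=> x; rewrite hornerM horner_exp hornerXsubC mulf_neq0 ?expf_neq0 ?subr_eq0 //.
  by near: x; exact: nbhs_dnbhs q1_near.
by near: x; exact: nbhs_dnbhs_neq.
Unshelve. all: by end_near.
Qed.

Lemma near_dnbhs_at_left_right (c : R) (P : set R) :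
  (\forall x \near c^'-, P x) -> (\forall x \near c^'+, P x) -> \forall x \near c^', P x.
Proof.
rewrite !near_withinE => Pl Pr; near=> x => /= xc.
move: xc; rewrite neq_lt => /orP[]; near: x; [exact: Pl | exact: Pr].
Unshelve. all: by end_near.
Qed.

Definition itv_based (F : set_system R) :=
  forall P : set R, F P -> exists u v : R, F [set x | u < x < v] /\ [set x | u < x < v] `<=` P.

Lemma at_right_itv_based (c : R) : itv_based c^'+.
Proof.
move=> P /nbhs_ballP [e /= e0 ballP].
exists c, (c + e); split.
  near=> x; apply/andP; split; near: x; [exact: nbhs_right_gt | apply: nbhs_right_lt; lra].
move=> x /andP[cx xce]; apply: ballP => //.
by rewrite /ball /= ltr_norml; apply/andP; split; lra.
Unshelve. all: by end_near.
Qed.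

Lemma at_left_itv_based (c : R) : itv_based c^'-.
Proof.
move=> P /nbhs_ballP [e /= e0 ballP].
exists (c - e), c; split.
  near=> x; apply/andP; split; near: x; [apply: nbhs_left_gt; lra | exact: nbhs_left_lt].
move=> x /andP[xce cx]; apply: ballP => //.
by rewrite /ball /= ltr_norml; apply/andP; split; lra.
Unshelve. all: by end_near.
Qed.

Lemma at_right_dnbhs (c : R) : c^'+ `=>` c^'.
Proof. by apply: within_subset => x /gt_eqF ->. Qed.

Lemma at_left_dnbhs (c : R) : c^'- `=>` c^'.
Proof. by apply: within_subset => x /lt_eqF ->. Qed.

End one_sided.

(** * Derivatives, extrema and convexity *)

Lemma MVT_cc (R : realType) (f df : R -> R) (u w : R) : u < w ->
  (forall y, u <= y <= w -> is_derive y 1 f (df y)) ->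
  exists2 z, u < z < w & f w - f u = df z * (w - u).
Proof.
move=> uw fdf.
have fdf_oo y : y \in `]u, w[ -> is_derive y 1 f (df y).
  by rewrite in_itv /= => /andP[uy yw]; apply: fdf; rewrite !ltW.
have fcont : {within `[u, w], continuous f}.
  by apply: derivable_within_continuous => y; rewrite in_itv /= => /fdf [].
by have [z] := MVT uw fdf_oo fcont; rewrite in_itv /=; exists z.
Qed.

Lemma local_min_point_is_derive0 (R : realType) (f : R -> R) (x : R) :
  local_min_point f x -> (\forall y \near x, derivable f y 1) -> is_derive x 1 f 0.
Proof.
move=> fmin df; have : \forall y \near x, f x <= f y /\ derivable f y 1.
  by near=> y; split; near: y.
move=> /nbhs_ballP [e /= e0 fxe].
have in_ball y : y \in `]x - e / 2, x + e / 2[ -> ball x e y.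
  by rewrite in_itv /= /ball /= ltr_norml => /andP[? ?]; apply/andP; split; lra.
apply: (@derive1_at_min _ f (x - e / 2) (x + e / 2)); first lra.
- by move=> y /in_ball /fxe [].
- by rewrite in_itv /=; apply/andP; split; lra.
- by move=> y /in_ball /fxe [].
Unshelve. all: by end_near.
Qed.

Lemma convex_on_sub (R : realType) (f : R -> R) (A B : set R) :
  B `<=` A -> convex_on f A -> convex_on f B.
Proof. by move=> BA cvx x y t /BA Ax /BA Ay; apply: cvx. Qed.

Lemma inflection_pointN (R : realType) (f : R -> R) (x : R) :
  inflection_point f x -> inflection_point (fun y => - f y) x.
Proof.
case=> d d0 infl; exists d => //; rewrite /concave_on.
have -> : (fun y => - - f y) = f by apply/funext => y; rewrite opprK.
by case: infl => -[? ?]; [right|left].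
Qed.

Lemma not_convex_derive2_lt0 (R : realType) (f f1 f2 : R -> R) (u w : R) : u < w ->
  (forall y, u <= y <= w -> is_derive y 1 f (f1 y)) ->
  (forall y, u <= y <= w -> is_derive y 1 f1 (f2 y)) ->
  (forall y, u <= y <= w -> f2 y < 0) ->
  ~ convex_on f [set z | u <= z <= w].
Proof.
move=> uw df df1 f2_lt0 cvx.
have in_uw a b y : u <= a -> b <= w -> a <= y <= b -> u <= y <= w.
  by move=> ua bw /andP[ay yb]; apply/andP; split; lra.
have [m mE] : {m | m * 2 = u + w} by exists ((u + w) / 2); rewrite divfK.
have [um mw] : u < m /\ m < w by split; lra.
have [z1 /andP[uz1 z1m] E1] := MVT_cc um (fun y => df y \o in_uw _ _ _ (lexx u) (ltW mw)).
have [z2 /andP[mz2 z2w] E2] := MVT_cc mw (fun y => df y \o in_uw _ _ _ (ltW um) (lexx w)).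
have z12 : z1 < z2 by lra.
have [z3 /andP[z13 z32] E3] :=
  MVT_cc z12 (fun y => df1 y \o in_uw _ _ _ (ltW uz1) (ltW z2w)).
have f1_decr : f1 z2 < f1 z1.
  suff : f2 z3 * (z2 - z1) < 0 by lra.
  by rewrite pmulr_llt0 ?subr_gt0 // f2_lt0 //; apply/andP; split; lra.
have slopes : f1 z2 * (w - m) < f1 z1 * (m - u).
  have -> : w - m = m - u by lra.
  by rewrite ltr_pM2r // subr_gt0.
have := cvx u w (1 / 2); rewrite /= !lexx ltW //.
have -> : 1 / 2 * u + (1 - 1 / 2) * w = m by lra.
have half_ge0 : (0 : R) <= 1 / 2 by lra.
have half_le1 : (1 / 2 : R) <= 1 by lra.
move=> /(_ isT isT half_ge0 half_le1); lra.
Qed.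

Lemma not_concave_derive2_gt0 (R : realType) (f f1 f2 : R -> R) (u w : R) : u < w ->
  (forall y, u <= y <= w -> is_derive y 1 f (f1 y)) ->
  (forall y, u <= y <= w -> is_derive y 1 f1 (f2 y)) ->
  (forall y, u <= y <= w -> 0 < f2 y) ->
  ~ concave_on f [set z | u <= z <= w].
Proof.
move=> uw df df1 f2_gt0; apply: (@not_convex_derive2_lt0 _ _ (- f1) (- f2) _ _ uw).
- by move=> y /df; exact: is_deriveN.
- by move=> y /df1; exact: is_deriveN.
- by move=> y /f2_gt0; rewrite /= oppr_lt0.
Qed.

Lemma not_inflection_derive2_neq0 (R : realType) (f f1 f2 : R -> R) (x : R) :
  (\forall y \near x, is_derive (y : R) 1 f (f1 y) /\ is_derive y 1 f1 (f2 y)) ->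
  f2 x != 0 -> {for x, continuous f2} -> ~ inflection_point f x.
Proof.
move=> d2f f2x0 f2c.
wlog f2_lt0 : f f1 f2 d2f f2x0 f2c / f2 x < 0 => [hwlog|].
  have [f2_lt0|f2_ge0] := ltP (f2 x) 0; first exact: (hwlog f f1 f2).
  move=> /inflection_pointN; apply: (hwlog _ (fun y => - f1 y) (fun y => - f2 y)).
  - by apply: filterS d2f => y [d1 d2]; split; exact: is_deriveN.
  - by rewrite oppr_eq0.
  - exact: continuousN.
  - by rewrite oppr_lt0 lt_neqAle eq_sym f2x0.
move=> [d d0 infl].
have f2_near : \forall y \near x, f2 y < 0 by exact: cvgr_lt f2c _ f2_lt0.
have : \forall y \near x,
    [/\ is_derive (y : R) 1 f (f1 y), is_derive y 1 f1 (f2 y) & f2 y < 0].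
  by apply: filterS2 d2f f2_near => y [].
move=> /nbhs_ballP [e /= e0 fxe].
have [d' [d'0 d'd d'e]] : exists d', [/\ 0 < d', d' <= d & d' < e].
  by exists (Num.min d (e / 2)); rewrite lt_min d0 ge_min lexx /= gt_min; split=> //; lra.
have near_seg y : x - d' <= y <= x + d' ->
    [/\ is_derive y 1 f (f1 y), is_derive y 1 f1 (f2 y) & f2 y < 0].
  by move=> /andP[? ?]; apply: fxe; rewrite /ball /= ltr_norml; apply/andP; split; lra.
have ncvx u w : u < w -> x - d' <= u -> w <= x + d' -> ~ convex_on f [set z | u <= z <= w].
  move=> uw du wd; apply: (@not_convex_derive2_lt0 _ _ f1 f2 _ _ uw) => y /andP[uy yw];
    by have [] // := near_seg y; apply/andP; split; lra.
case: infl => [[cvx _]|[_ cvx]]; [apply: (ncvx (x - d') x) | apply: (ncvx x (x + d'))]; try lra.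
- by apply: convex_on_sub cvx => z /andP[? ?]; apply/andP; split; lra.
- by apply: convex_on_sub cvx => z /andP[? ?]; apply/andP; split; lra.
Qed.

(** * Implicit differentiation *)

Section implicit_derivatives.
Variables (R : realType) (g : R -> R) (P : {poly {poly R}}).
Local Notation ev Q x := (peval2 Q x (g x)).

Definition graph_regular x := [/\ derivable g x 1, ev P x = 0 & ev P^`() x != 0].

Definition implicit_d1 x := - ev (pdx P) x / ev P^`() x.

(* g'' = - (P_xx P_y^2 - 2 P_xy P_x P_y + P_yy P_x^2) / P_y^3, with the two
   mixed partials kept apart. *)
Definition implicit_d2_num : {poly {poly R}} :=
  pdx (pdx P) * P^`() ^+ 2 - (pdx P)^`() * pdx P * P^`() - pdx P^`() * pdx P * P^`()
  + P^`()^`() * pdx P ^+ 2.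

Definition implicit_d2 x := - ev implicit_d2_num x / ev P^`() x ^+ 3.

Lemma implicit_is_derive x :
  (\forall y \near x, graph_regular y) -> is_derive x 1 g (implicit_d1 x).
Proof.
move=> reg; have [dgx _ Pyx] := nbhs_singleton reg.
have : is_derive x 1 (cst 0) (ev (pdx P) x + ev P^`() x * 'D_1 g x).
  apply: near_eq_is_derive (peval2_is_derive P (derivableP dgx)).
  by apply: filterS reg => y [].
move=> d0; have := @derive_val _ _ _ _ _ _ _ d0; rewrite derive_cst => /esym/eqP.
rewrite addr_eq0 => /eqP dPx.
by apply: DeriveDef => //; rewrite /implicit_d1 dPx; field.
Qed.

Lemma implicit_d1_is_derive x :
  (\forall y \near x, graph_regular y) -> is_derive x 1 implicit_d1 (implicit_d2 x).
Proof.
move=> reg; have [_ _ Pyx] := nbhs_singleton reg.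
have dg := implicit_is_derive reg.
have dA := peval2_is_derive (pdx P) dg.
have dB := peval2_is_derive P^`() dg.
have dBinv : is_derive x 1 (fun t => (ev P^`() t)^-1)
    (- (ev P^`() x) ^- 2 *: (ev (pdx P^`()) x + ev P^`()^`() x * implicit_d1 x)).
  apply: DeriveDef; first by apply: derivableV => //; case: dB.
  by rewrite deriveV // ?derive_val; case: dB.
have -> : implicit_d1 = - ((fun t => ev (pdx P) t) * (fun t => (ev P^`() t)^-1)).
  by apply/funext => t; rewrite /implicit_d1 /= mulNr.
apply: is_derive_eq; rewrite /implicit_d2 /implicit_d2_num /implicit_d1 /GRing.scale /=.
by rewrite !(peval2B, peval2D, peval2M) !expr2 /=; field.
Qed.

Lemma implicit_d2_continuous x : graph_regular x -> {for x, continuous implicit_d2}.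
Proof.
move=> [dgx _ Pyx]; apply: continuousM; first exact/continuousN/peval2_continuous.
apply: continuousV; first by rewrite expf_neq0.
exact: continuous_comp (peval2_continuous (P := P^`()) dgx) (@exprn_continuous R 3 _).
Qed.

End implicit_derivatives.

(** * Germs along interval-based filters *)

Section itv_based_filter.
Variables (R : realType) (F : set_system R).
Context {FF : ProperFilter F}.
Hypothesis F_itv : itv_based F.

Lemma itv_based_near_nbhs (P : set R) :
  (\forall x \near F, P x) -> \forall x \near F, \forall y \near x, P y.
Proof.
move=> /F_itv [u [v [Fuv uvP]]]; apply: filterS Fuv => x /andP[ux xv].
near=> y; apply: uvP; apply/andP; split; near: y; [exact: lt_nbhsr | exact: lt_nbhsl].
Unshelve. all: by end_near.
Qed.

Lemma itv_based_zero_alternative (h1 h2 : R -> R) :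
  (\forall x \near F, {for x, continuous h1} /\ {for x, continuous h2}) ->
  (\forall x \near F, h1 x * h2 x = 0) ->
  (\forall x \near F, h1 x != 0 \/ h2 x != 0) ->
  (\forall x \near F, h1 x = 0) \/ (\forall x \near F, h2 x = 0).
Proof.
move=> hc h0 hnz; have [u [v [Fuv uvh]]] := F_itv (filterI hc (filterI h0 hnz)).
set A := [set x | u < x < v] in Fuv uvh.
have cA : connected A by rewrite /A -set_itvoo; apply/connected_intervalP/interval_is_interval.
set B := [set x | A x /\ h1 x = 0].
have [B0|noB] := pselect (B !=set0); [left|right]; last first.
  apply: filterS Fuv => x Ax; have [_ [/eqP]] := uvh x Ax.
  rewrite mulf_eq0 => /orP[/eqP h1x|/eqP //]; by case: noB; exists x.
suff BA : B = A by apply: filterS Fuv => x; rewrite -BA => -[].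
apply: connected_clopen_eq => //; first by move=> x [].
- move=> x [Ax h1x]; have [[_ c2] [_ nz]] := uvh x Ax.
  have h2x : h2 x != 0 by case: nz => //; rewrite h1x eqxx.
  near=> y => Ay; split => //; have [_ [/eqP]] := uvh y Ay.
  rewrite mulf_eq0 => /orP[/eqP //|/eqP h2y]; exfalso; move: h2y; apply/eqP.
  by near: y; exact: (cvgr_neq0 _ c2 h2x).
- move=> x Ax nBx; have [[c1 _] _] := uvh x Ax.
  have h1x : h1 x != 0 by apply/eqP => h1x; apply: nBx.
  near=> y => _ [_]; apply/eqP; near: y; exact: (cvgr_neq0 _ c1 h1x).
Unshelve. all: by end_near.
Qed.

Lemma itv_based_affine (f : R -> R) (m : R) :
  (\forall x \near F, is_derive (x : R) 1 f m) -> exists k, \forall x \near F, f x = m * x + k.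
Proof.
move=> /F_itv [u [v [Fuv uvf]]]; have [x0 /andP[ux0 x0v]] := filter_ex Fuv.
exists (f x0 - m * x0); apply: filterS Fuv => x /andP[ux xv].
have fm y : Num.min x0 x <= y <= Num.max x0 x -> is_derive y 1 f m.
  move=> /andP[]; rewrite ge_min le_max => y1 y2; apply: uvf.
  by apply/andP; split; case/orP: y1; case/orP: y2; lra.
case: (ltgtP x0 x) fm => [lt|lt|->] fm; last by lra.
- have [z _] := @MVT_cc R f (fun=> m) _ _ lt fm; lra.
- have [z _] := @MVT_cc R f (fun=> m) _ _ lt fm; lra.
Qed.

End itv_based_filter.

Section vanishing.
Variables (R : realType) (F : set_system R) (c : R) (g : R -> R).
Context {FF : ProperFilter F}.
Hypotheses (F_itv : itv_based F) (F_dnbhs : F `=>` c^').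
Hypothesis g_derivable : \forall x \near F, derivable g x 1.

Implicit Types P Q : {poly {poly R}}.
Local Notation ev Q x := (peval2 Q x (g x)).

Definition vanishes_near (Q : {poly {poly R}}) := \forall x \near F, ev Q x = 0.

Lemma near_horner_neq0 (k : {poly R}) : k != 0 -> \forall x \near F, k.[x] != 0.
Proof. by move=> k0; apply: F_dnbhs; exact: near_poly_neq0. Qed.

Lemma vanishes_near0 : vanishes_near 0.
Proof. by near=> x; rewrite /peval2 !horner0. Unshelve. all: by end_near. Qed.

Lemma vanishes_near_dvdp P Q : P %| Q -> vanishes_near P -> vanishes_near Q.
Proof.
case/dvdpP => -[k W] /= k0 kQ VP; near=> x.
have kx : k.[x] != 0 by near: x; exact: near_horner_neq0.
have : ev (k *: Q) x = 0 by rewrite kQ peval2M; near: x; apply: filterS VP => x ->; rewrite mulr0.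
by rewrite peval2Z => /eqP; rewrite mulf_eq0 (negPf kx) => /eqP.
Unshelve. all: by end_near.
Qed.

Lemma near_peval2_neq0_size1 Q : size Q = 1%N -> \forall x \near F, ev Q x != 0.
Proof.
move=> /eqP/size_poly1P [k k0 ->]; apply: filterS (near_horner_neq0 k0) => x.
by rewrite peval2C.
Qed.

Lemma vanishes_near_size_gt1 Q : Q != 0 -> vanishes_near Q -> (1 < size Q)%N.
Proof.
move=> Q0 VQ; rewrite ltn_neqAle eq_sym lt0n size_poly_eq0 Q0 andbT.
apply/eqP => /near_peval2_neq0_size1 nQ.
by have [x [/eqP]] := filter_ex (filterI nQ VQ).
Qed.

Lemma coprimep_near_neq0 P Q : coprimep P Q ->
  \forall x \near F, ev P x != 0 \/ ev Q x != 0.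
Proof.
wlog sPQ : P Q / (size P <= size Q)%N => [hwlog|].
  case: (leqP (size P) (size Q)) => [|/ltnW] s; first exact: hwlog.
  rewrite coprimep_sym => /(hwlog _ _ s); apply: filterS => x; tauto.
move=> PQ; case: (ltnP 1 (size P)) => sP.
  have r0 : resultant P Q != 0.
    by rewrite resultant_eq0 -leqNgt; move: PQ; rewrite coprimep_def => /eqP ->.
  have [[u v] /= _ uvPQ] := resultant_in_ideal sP (leq_trans sP sPQ).
  apply: filterS (near_horner_neq0 r0) => x; rewrite -(peval2C _ x (g x)) uvPQ.
  rewrite peval2D !peval2M; case: (eqVneq (ev P x) 0) => [->|]; last by left.
  by rewrite mulr0 add0r mulf_eq0 negb_or => /andP[_]; right.
have [P0|P0] := eqVneq P 0.
  move: PQ; rewrite P0 coprime0p -size_poly_eq1 => /eqP/near_peval2_neq0_size1.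
  by apply: filterS; right.
have sP1 : size P = 1%N by apply/eqP; rewrite eqn_leq sP lt0n size_poly_eq0.
by apply: filterS (near_peval2_neq0_size1 sP1) => x; left.
Qed.

Lemma coprimep_vanishes_near_mul P Q : coprimep P Q ->
  vanishes_near (P * Q) -> vanishes_near P \/ vanishes_near Q.
Proof.
move=> PQ VPQ; apply: itv_based_zero_alternative => //.
- by apply: filterS g_derivable => x dgx; split; apply: peval2_continuous.
- by apply: filterS VPQ => x; rewrite peval2M.
- exact: coprimep_near_neq0.
Qed.

Lemma vanishes_near_mul P Q :
  vanishes_near (P * Q) -> vanishes_near P \/ vanishes_near Q.
Proof.
have [n] := ubnP (size P + size Q); elim: n P Q => // n IH P Q sPQ VPQ.
have [->|P0] := eqVneq P 0; first by left; exact: vanishes_near0.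
have [->|Q0] := eqVneq Q 0; first by right; exact: vanishes_near0.
have [cop|ncop] := boolP (coprimep P Q); first exact: coprimep_vanishes_near_mul.
set H := gcdp P Q.
have H0 : H != 0 by rewrite gcdp_eq0 negb_and P0.
have sH : (1 < size H)%N.
  by move: ncop; rewrite coprimep_def ltn_neqAle lt0n size_poly_eq0 H0 andbT eq_sym.
have [kP [P' [kP0 P'0 PE sP]]] := dvdp_factor_size P0 (dvdp_gcdl P Q).
have [kQ [Q' [kQ0 Q'0 QE sQ]]] := dvdp_factor_size Q0 (dvdp_gcdr P Q).
have sP'Q' := size_mul P'0 Q'0.
have [sP'0 sQ'0] : (0 < size P')%N /\ (0 < size Q')%N by rewrite !size_poly_gt0.
(* Strip the common factor H: P' * Q' * H still vanishes and is smaller. *)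
have VP'Q'H : vanishes_near (P' * Q' * H).
  apply: filterS VPQ => x; rewrite peval2M => ePQ.
  have eP : ev P' x * ev H x = kP.[x] * ev P x by rewrite -peval2M -PE peval2Z.
  have eQ : ev Q' x * ev H x = kQ.[x] * ev Q x by rewrite -peval2M -QE peval2Z.
  have : ev (P' * Q' * H) x * ev H x = 0.
    rewrite !peval2M; transitivity ((ev P' x * ev H x) * (ev Q' x * ev H x)); first by ring.
    rewrite eP eQ; transitivity (kP.[x] * kQ.[x] * (ev P x * ev Q x)); first by ring.
    by rewrite ePQ mulr0.
  by move/eqP; rewrite mulf_eq0 => /orP[/eqP //|/eqP eH]; rewrite !peval2M eH mulr0.
have [ltP'Q'H ltP'Q'] : (size (P' * Q')%R + size H < n /\ size P' + size Q' < n)%N.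
  (* The sizes are stated in convertible but distinct canonical instances,
     which [lia] would treat as different atoms; [set] identifies them. *)
  move: sPQ sH sP'0 sQ'0; rewrite sP'Q' sP sQ.
  by set a := size H; set b := size P'; set d := size Q'; lia.
have [VP'Q'|VH] := IH (P' * Q') H ltP'Q'H VP'Q'H.
  have [VP'|VQ'] := IH P' Q' ltP'Q' VP'Q'.
    by left; apply: vanishes_near_dvdp VP'; apply/dvdpP; exists (kP, H); rewrite //= PE mulrC.
  by right; apply: vanishes_near_dvdp VQ'; apply/dvdpP; exists (kQ, H); rewrite //= QE mulrC.
by left; exact: vanishes_near_dvdp (dvdp_gcdl P Q) VH.
Qed.

Definition min_vanishing P :=
  [/\ P != 0, vanishes_near P & forall Q, Q != 0 -> vanishes_near Q -> (size P <= size Q)%N].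

Lemma exists_min_vanishing P : P != 0 -> vanishes_near P -> exists Q, min_vanishing Q.
Proof.
have [n] := ubnP (size P); elim: n P => // n IH P sP P0 VP.
have [[Q [Q0 VQ sQ]]|nosmaller] :=
  pselect (exists Q, [/\ Q != 0, vanishes_near Q & (size Q < size P)%N]).
  by apply: (IH Q) => //; lia.
exists P; split => // Q Q0 VQ; rewrite leqNgt; apply/negP => sQ.
by apply: nosmaller; exists Q.
Qed.

Lemma min_vanishing_dichotomy P : min_vanishing P ->
  forall Q, vanishes_near Q \/ \forall x \near F, ev Q x != 0.
Proof.
move=> [P0 VP Pmin] Q; have [cop|ncop] := boolP (coprimep P Q).
  right; apply: filterS (filterI VP (coprimep_near_neq0 cop)) => x [-> []] //.
  by rewrite eqxx.
set D := gcdp P Q.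
have D0 : D != 0 by rewrite gcdp_eq0 negb_and P0.
have sD : (1 < size D)%N.
  by move: ncop; rewrite coprimep_def ltn_neqAle lt0n size_poly_eq0 D0 andbT eq_sym.
have [k [E [k0 E0 PE sP]]] := dvdp_factor_size P0 (dvdp_gcdl P Q).
have VED : vanishes_near (E * D).
  apply: vanishes_near_dvdp VP; apply/dvdpP; exists (1, k%:P); first exact: oner_neq0.
  by rewrite scale1r mul_polyC PE.
have [VE|VD] := vanishes_near_mul VED; last by left; exact: vanishes_near_dvdp (dvdp_gcdr P Q) VD.
have := Pmin E E0 VE; move: sD; rewrite sP.
by set a := size D; set b := size E; lia.
Qed.

Lemma min_vanishing_deriv P : min_vanishing P -> \forall x \near F, ev P^`() x != 0.
Proof.
move=> Pm; have [P0 VP Pmin] := Pm; have sP := vanishes_near_size_gt1 P0 VP.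
have [VdP|//] := min_vanishing_dichotomy Pm P^`().
by have := leq_ltn_trans (Pmin _ (deriv_neq0 sP) VdP) (lt_size_deriv P0); rewrite ltnn.
Qed.

End vanishing.

Section graph_germ.
Variables (R : realType) (F : set_system R) (c : R) (f : {poly {poly R}}) (g : R -> R).
Context {FF : ProperFilter F}.
Hypotheses (F_itv : itv_based F) (F_dnbhs : F `=>` c^').
Hypothesis g_derivable : \forall x \near F, derivable g x 1.
Hypotheses (f_neq0 : f != 0) (f_vanishes : vanishes_near F g f).
Hypothesis g_not_affine : forall m k, ~ \forall x \near F, g x = m * x + k.

Lemma near_graph_regular : exists2 P, min_vanishing F g P &
  \forall x \near F, \forall y \near x, graph_regular g P y.
Proof.
have [P Pmin] := exists_min_vanishing f_neq0 f_vanishes.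
exists P => //; apply: itv_based_near_nbhs => //.
have [_ VP _] := Pmin; have dP := min_vanishing_deriv F_itv F_dnbhs g_derivable Pmin.
by near=> x; split; near: x; [exact: g_derivable | exact: VP | exact: dP].
Unshelve. all: by end_near.
Qed.

Lemma near_not_local_min_point : \forall x \near F, ~ local_min_point g x.
Proof.
have [P Pmin reg] := near_graph_regular.
have [VPx|nPx] := min_vanishing_dichotomy F_itv F_dnbhs g_derivable Pmin (pdx P).
  have [k gk] : exists k, \forall x \near F, g x = 0 * x + k.
    apply: itv_based_affine => //; apply: filterS2 reg VPx => x regx Px0.
    by have := implicit_is_derive regx; rewrite /implicit_d1 Px0 oppr0 mul0r.
  by case: (g_not_affine gk).
apply: filterS2 reg nPx => x regx Px0 xmin.
have [_ _ Pyx] := nbhs_singleton regx.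
have dg_near : \forall y \near x, derivable g y 1 by apply: filterS regx => y [].
have [_ dg0] := local_min_point_is_derive0 xmin dg_near.
have [_] := implicit_is_derive regx; rewrite dg0 => /esym/eqP.
by rewrite /implicit_d1 mulf_eq0 invr_eq0 oppr_eq0 (negPf Px0) (negPf Pyx).
Qed.

Lemma near_not_inflection_point : \forall x \near F, ~ inflection_point g x.
Proof.
have [P Pmin reg] := near_graph_regular; have reg2 := itv_based_near_nbhs (FF := FF) F_itv reg.
have [VN|nN] := min_vanishing_dichotomy F_itv F_dnbhs g_derivable Pmin (implicit_d2_num P).
  have [k d1k] : exists k, \forall x \near F, implicit_d1 g P x = 0 * x + k.
    apply: itv_based_affine => //; apply: filterS2 reg VN => x regx Nx0.
    by have := implicit_d1_is_derive regx; rewrite /implicit_d2 Nx0 oppr0 mul0r.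
  have [k' gk'] : exists k', \forall x \near F, g x = k * x + k'.
    apply: itv_based_affine => //; apply: filterS2 reg d1k => x regx d1x.
    by have := implicit_is_derive regx; rewrite d1x mul0r add0r.
  by case: (g_not_affine gk').
apply: filterS2 reg2 nN => x reg2x Nx0.
have regx := nbhs_singleton reg2x; have [_ _ Pyx] := nbhs_singleton regx.
apply: (@not_inflection_derive2_neq0 _ _ (implicit_d1 g P) (implicit_d2 g P)).
- apply: filterS reg2x => y regy.
  by split; [exact: implicit_is_derive | exact: implicit_d1_is_derive].
- by rewrite /implicit_d2 mulf_neq0 ?oppr_eq0 ?invr_eq0 ?expf_neq0.
- exact: implicit_d2_continuous (nbhs_singleton regx).
Qed.

End graph_germ.

(** * Implicit graphs on an interval *)

Section implicit_graph.
Variables (R : realType) (f : {poly {poly R}}) (g : R -> R) (I J : set R).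
Hypotheses (I_open : open I) (I_connected : connected I) (J_open : open J).
Hypothesis g_maps : forall x, I x -> J (g x).
Hypothesis g_derivable : forall x, I x -> derivable g x 1.
Hypothesis graph_eq : forall x y, I x -> J y -> peval2 f x y = 0 <-> g x = y.

Lemma graph_affine_global (u v m k : R) : u < v -> [set x | u < x < v] `<=` I ->
  (forall x, u < x < v -> g x = m * x + k) -> forall x, I x -> g x = m * x + k.
Proof.
move=> uv uvI g_uv.
have qE x : (f.[m *: 'X + k%:P]).[x] = peval2 f x (m * x + k).
  by rewrite horner_comp_peval2 hornerD hornerZ hornerX hornerC.
have [c /andP[uc cv]] : exists c, u < c < v by exists ((u + v) / 2); apply/andP; split; lra.
have q0 : f.[m *: 'X + k%:P] = 0.
  apply/eqP/negPn/negP => q_neq0.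
  have : \forall x \near c^', (f.[m *: 'X + k%:P]).[x] != 0 /\ u < x < v.
    near=> x; split; first by near: x; exact: near_poly_neq0.
    by apply/andP; split; near: x; apply: nbhs_dnbhs; [exact: lt_nbhsr | exact: lt_nbhsl].
  move=> /filter_ex [x [+ xuv]]; rewrite qE -(g_uv x xuv).
  by rewrite (proj2 (graph_eq (uvI _ xuv) (g_maps (uvI _ xuv))) erefl) eqxx.
have on_line x : I x -> J (m * x + k) -> g x = m * x + k.
  by move=> Ix Jx; apply/graph_eq => //; rewrite -qE q0 horner0.
have line_cont : continuous (fun y : R => m * y + k).
  move=> y; apply: continuousD; last exact: cst_continuous.
  by apply: continuousM; [exact: cst_continuous | exact: cvg_id].
suff <- : [set x | I x /\ g x = m * x + k] = I by move=> x [].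
apply: connected_clopen_eq => //.
- by move=> x [].
- by exists c; split; [apply: uvI | apply: g_uv]; apply/andP.
- move=> x [Ix gx]; have Jx : J (m * x + k) by rewrite -gx; exact: g_maps.
  have : \forall y \near x, J (m * y + k) by apply: (line_cont x); apply: open_nbhs_nbhs; split.
  by apply: filterS => y Jy Iy; split => //; exact: on_line.
- move=> x Ix nx; have nx' : g x - (m * x + k) != 0.
    by rewrite subr_eq0; apply/eqP => gx; apply: nx.
  have gc : {for x, continuous (fun y => g y - (m * y + k))}.
    apply: continuousB; last exact: line_cont.
    by apply/differentiable_continuous; rewrite -derivable1_diffP; exact: g_derivable.
  by apply: filterS (cvgr_neq0 _ gc nx') => y ny _ [_ gy]; move: ny; rewrite gy subrr eqxx.
Unshelve. all: by end_near.
Qed.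

Hypothesis f_neq0 : f != 0.
Hypothesis g_not_affine : ~ exists m k, forall x, I x -> g x = m * x + k.

Lemma near_not_local_min_inflection (c : R) (F : set_system R) {FF : ProperFilter F} :
  I c -> itv_based F -> F `=>` c^' ->
  \forall x \near F, ~ local_min_point g x /\ ~ inflection_point g x.
Proof.
move=> Ic F_itv F_dnbhs.
have nearI : \forall x \near F, I x.
  by apply: F_dnbhs; apply: nbhs_dnbhs; exact: open_nbhs_nbhs.
have g_der : \forall x \near F, derivable g x 1 by apply: filterS nearI; exact: g_derivable.
have f_van : vanishes_near F g f.
  by apply: filterS nearI => x Ix; apply/graph_eq => //; exact: g_maps.
have g_na m k : ~ \forall x \near F, g x = m * x + k.
  move=> gmk; apply: g_not_affine; exists m, k.
  have [u [v [Fuv uv_sub]]] := F_itv _ (filterI nearI gmk).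
  have [x0 /andP [ux0 x0v]] := filter_ex Fuv.
  by apply: (@graph_affine_global u v) => [|x /uv_sub []|x /uv_sub []] //; lra.
by apply: filterI; [exact: (near_not_local_min_point F_itv F_dnbhs g_der f_neq0 f_van g_na)
  | exact: (near_not_inflection_point F_itv F_dnbhs g_der f_neq0 f_van g_na)].
Qed.

Lemma dnbhs_not_local_min_inflection (c : R) : I c ->
  \forall x \near c^', ~ local_min_point g x /\ ~ inflection_point g x.
Proof.
move=> Ic; apply: near_dnbhs_at_left_right; apply: (near_not_local_min_inflection Ic).
- exact: at_left_itv_based.
- exact: at_left_dnbhs.
- exact: at_right_itv_based.
- exact: at_right_dnbhs.
Qed.

End implicit_graph.

Unset Implicit Arguments.

Theorem corollary2p2 (R : realType) (f : {poly {poly R}}) (x0 y0 : R)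
  (i1 i2 j1 j2 : \bar R) (g : R -> R) (a b : R) :
  peval2 f x0 y0 = 0 ->
  pdy f x0 y0 != 0 ->
  oitv i1 i2 x0 -> oitv j1 j2 y0 ->
  (forall x, oitv i1 i2 x -> oitv j1 j2 (g x)) ->
  (forall x, oitv i1 i2 x -> derivable g x 1) ->
  g x0 = y0 ->
  [set xy : R * R | oitv i1 i2 xy.1 /\ oitv j1 j2 xy.2 /\ peval2 f xy.1 xy.2 = 0]
    = [set (x, g x) | x in oitv i1 i2] ->
  [set x | a <= x <= b] `<=` oitv i1 i2 ->
  ~ (exists m c : R, forall x, oitv i1 i2 x -> g x = m * x + c) ->
  finite_set [set x | a <= x <= b /\ inflection_point g x] /\
  finite_set [set x | a <= x <= b /\ local_min_point g x].
Proof.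
move=> _ fy0 _ _ gIJ gder _ graph abI g_not_affine.
have f0 : f != 0 by apply: contraNneq fy0 => ->; rewrite /pdy deriv0 /peval2 !horner0.
have graph_eq x y : oitv i1 i2 x -> oitv j1 j2 y -> peval2 f x y = 0 <-> g x = y.
  move=> Ix Jy; split=> [fxy|<-].
    have : [set (x, g x) | x in oitv i1 i2] (x, y) by rewrite -graph.
    by case=> x' _ [-> ->].
  have : [set (x, g x) | x in oitv i1 i2] (x, g x) by exists x.
  by rewrite -graph => -[_ []].
have isolated c : a <= c <= b ->
    \forall x \near c^', ~ local_min_point g x /\ ~ inflection_point g x.
  by move=> /abI; apply: (dnbhs_not_local_min_inflection (@open_oitv _ i1 i2)
    (@connected_oitv _ i1 i2) (@open_oitv _ j1 j2) gIJ gder graph_eq f0 g_not_affine).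
have cK : compact [set x : R | a <= x <= b] by rewrite -set_itvcc; exact: segment_compact.
by split; apply: (finite_set_isolated_compact cK) => c /isolated; apply: filterS => x [? ?].
Qed.
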